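(* Let $T$ be a spanning tree, $\mathbf x\in\mathbb R^V$, and $\mathbf b$ a supply vector, and let $\mathbf f_{T,\mathbf x}$ be the associated tree-defined flow. Then $$\mathrm{gap}(\mathbf f_{T,\mathbf x},\mathbf x)=\frac12\sum_{(i,j)\in T}r(i,j)\cdot\frac{\Delta(C(i,j))^2}{R(C(i,j))^2}.$$
   Context: $G=(V,E)$ is a connected undirected graph with resistances $r(e)>0$; $\mathbf b\in\mathbb R^V$ with $\sum_ib(i)=0$; a $\mathbf b$-flow has net outflow $b(i)$ at every $i$ (with $f(j,i)=-f(i,j)$). $\mathcal E(\mathbf f)=\frac12\sum_e r(e)f(e)^2$, $\mathcal B(\mathbf x)=\mathbf b^\top\mathbf x-\frac12\mathbf x^\top\mathbf L\mathbf x$ with $\mathbf L$ the weighted Laplacian $\sum_{ij\in E}\frac1{r(i,j)}(\mathbf e_i-\mathbf e_j)(\mathbf e_i-\mathbf e_j)^\top$, and $\mathrm{gap}(\mathbf f,\mathbf x)=\mathcal E(\mathbf f)-\mathcal B(\mathbf x)$. Root $T$ and direct tree edges toward the root; for a tree edge $(i,j)$, $C(i,j)$ is the vertex set of the component of $T-ij$ containing $i$. For $C\subset V$: $R(C)=(\sum_{e\in\delta(C)}1/r(e))^{-1}$ with $\delta(C)$ the edges with exactly one endpoint in $C$, $b(C)=\sum_{v\in C}b(v)$, $f(C)=\sum_{kl\in E,\,k\in C,\,l\notin C}\frac{x(k)-x(l)}{r(k,l)}$, and $\Delta(C)=(b(C)-f(C))R(C)$. The tree-defined flow $\mathbf f_{T,\mathbf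 x}$ equals $\frac{x(i)-x(j)}{r(i,j)}$ on non-tree edges and, on tree edges, takes the unique values making it a $\mathbf b$-flow. *)

(* Graph G = (V, E) given by a finite edge type E with a
   reference orientation src e -> dst e for each undirected edge. *)
From HB Require Import structures.
From mathcomp Require Import all_boot all_order all_algebra.
Set Implicit Arguments. Unset Strict Implicit. Unset Printing Implicit Defensive.
Import Order.TTheory GRing.Theory Num.Theory.
Local Open Scope ring_scope.

Section Defs.
Variables (R : realFieldType) (V E : finType) (src dst : E -> V).

Definition sadj (S : {set E}) : rel V :=
  fun u w => [exists e in S, ((src e == u) && (dst e == w))
                          || ((src e == w) && (dst e == u))].

Definition conn (S : {set E}) (u w : V) : bool := connect (sadj S) u w.

Definition simple_graph : Prop :=
  (forall e, src e != dst e) /\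
  (forall e1 e2, ((src e1 == src e2) && (dst e1 == dst e2))
              || ((src e1 == dst e2) && (dst e1 == src e2)) -> e1 = e2).

(* T is a spanning tree: connected on all of V and acyclic (no edge of T
   lies on a cycle of T, i.e. its endpoints are disconnected in T - e). *)
Definition spanning_tree (T : {set E}) : Prop :=
  (forall u w, conn T u w) /\
  (forall e, e \in T -> ~~ conn (T :\ e) (src e) (dst e)).

Definition child (T : {set E}) (rho : V) (e : E) : V :=
  if conn (T :\ e) rho (src e) then dst e else src e.

(* C(i,j): vertex set of the component of T - ij containing i (the child) *)
Definition Ccomp (T : {set E}) (rho : V) (e : E) : {set V} :=
  [set v | conn (T :\ e) (child T rho e) v].

Definition cut (C : {set V}) (e : E) : bool := (src e \in C) != (dst e \in C).

Definition Rcut (r : E -> R) (C : {set V}) : R :=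
  (\sum_(e | cut C e) (r e)^-1)^-1.

Definition bset (b : V -> R) (C : {set V}) : R := \sum_(v in C) b v.

Definition fset (r : E -> R) (x : V -> R) (C : {set V}) : R :=
  \sum_(e | (src e \in C) && (dst e \notin C)) (x (src e) - x (dst e)) / r e
  + \sum_(e | (dst e \in C) && (src e \notin C)) (x (dst e) - x (src e)) / r e.

Definition Delta (r : E -> R) (b x : V -> R) (C : {set V}) : R :=
  (bset b C - fset r x C) * Rcut r C.

(* f (given on the reference orientation src -> dst) is a b-flow *)
Definition is_bflow (b : V -> R) (f : E -> R) : Prop :=
  forall v, \sum_(e | src e == v) f e - \sum_(e | dst e == v) f e = b v.

Definition energy (r : E -> R) (f : E -> R) : R :=
  2^-1 * \sum_e r e * f e ^+ 2.

(* weighted Laplacian L = sum_e 1/r(e) (e_i - e_j)(e_i - e_j)^T, as a V x V array *)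
Definition lap (r : E -> R) (u w : V) : R :=
  \sum_e (r e)^-1 * (((src e == u)%:R - (dst e == u)%:R)
                    * ((src e == w)%:R - (dst e == w)%:R)).

Definition dualB (r : E -> R) (b x : V -> R) : R :=
  \sum_v b v * x v - 2^-1 * \sum_u \sum_w x u * lap r u w * x w.

Definition gap (r : E -> R) (b x : V -> R) (f : E -> R) : R :=
  energy r f - dualB r b x.

(* f is the tree-defined flow f_{T,x}: it equals (x(i)-x(j))/r(i,j) on
   non-tree edges and is a b-flow (this determines it uniquely on T). *)
Definition tree_defined_flow (r : E -> R) (b x : V -> R) (T : {set E})
  (f : E -> R) : Prop :=
  (forall e, e \notin T -> f e = (x (src e) - x (dst e)) / r e) /\ is_bflow b f.

End Defs.

(** Write [g] for the potential flow [(x i - x j) / r(i,j)].  For any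
    [b]-flow [f], summation by parts gives [b^T x = sum_e f e (x i - x j)],
    and the Laplacian quadratic form is [sum_e (x i - x j)^2 / r e]; hence
    [gap(f, x) = 1/2 sum_e r e (f e - g e)^2].  A tree-defined flow agrees with
    [g] off the tree, so only tree edges contribute.  For a tree edge [e], the
    fundamental cut [C(e)] is crossed by [e] and by no other tree edge, so
    summing the flow conservation over [C(e)] gives
    [b(C) - f(C) = +-(f e - g e)], i.e. [f e - g e = +-Delta(C)/R(C)]. *)
From mathcomp Require Import all_boot all_order all_algebra.
From mathcomp Require Import ring lra.
Import Order.TTheory GRing.Theory Num.Theory.
Set Implicit Arguments. Unset Strict Implicit. Unset Printing Implicit Defensive.
Local Open Scope ring_scope.

Section TreeFlowGap.
Variables (R : realFieldType) (V E : finType) (src dst : E -> V).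

Lemma sadj_sym (S : {set E}) : symmetric (sadj src dst S).
Proof. by move=> u w; apply: eq_existsb => e; rewrite orbC. Qed.

Lemma conn_sym (S : {set E}) u w : conn src dst S u w = conn src dst S w u.
Proof. exact: (sym_connect_sym (@sadj_sym S)). Qed.

Definition grad (y : V -> R) (e : E) : R := y (src e) - y (dst e).

Definition cut_sign (C : {set V}) : E -> R := grad (fun v => (v \in C)%:R).

Lemma sum_fiber (p : E -> V) (F : E -> R) (y : V -> R) :
  \sum_v y v * \sum_(e | p e == v) F e = \sum_e y (p e) * F e.
Proof.
rewrite [RHS](partition_big p predT) //=; apply: eq_bigr => v _.
by rewrite mulr_sumr; apply: eq_big => // e /eqP ->.
Qed.

Lemma bflow_pairing (b y : V -> R) (f : E -> R) :
  is_bflow src dst b f -> \sum_v b v * y v = \sum_e f e * grad y e.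
Proof.
move=> fl; under eq_bigr => v _ do rewrite -(fl v) mulrC mulrBr.
by rewrite sumrB !sum_fiber -sumrB; apply: eq_bigr => e _; rewrite /grad; ring.
Qed.

Lemma incidence_pairing (y : V -> R) (e : E) :
  \sum_u y u * ((src e == u)%:R - (dst e == u)%:R) = grad y e.
Proof.
have sum_delta a : \sum_u y u * (a == u)%:R = y a.
  rewrite (bigD1 a) //= eqxx mulr1 big1 ?addr0 // => u /negPf.
  by rewrite eq_sym => ->; rewrite mulr0.
by under eq_bigr => u _ do rewrite mulrBr; rewrite sumrB !sum_delta.
Qed.

Lemma lap_quadE (r : E -> R) (x : V -> R) :
  \sum_u \sum_w x u * lap src dst r u w * x w
  = \sum_e (r e)^-1 * grad x e ^+ 2.
Proof.
rewrite /lap.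
under eq_bigr => u _ do under eq_bigr => w _ do rewrite mulr_sumr mulr_suml.
under eq_bigr => u _ do rewrite exchange_big.
rewrite exchange_big; apply: eq_bigr => e _.
rewrite -incidence_pairing expr2 mulr_suml mulr_sumr; apply: eq_bigr => u _.
by rewrite !mulr_sumr; apply: eq_bigr => w _; ring.
Qed.

Lemma gap_bflowE (r : E -> R) (b x : V -> R) (f : E -> R) :
  (forall e, r e != 0) -> is_bflow src dst b f ->
  gap src dst r b x f = 2^-1 * \sum_e r e * (f e - grad x e / r e) ^+ 2.
Proof.
move=> rn0 fl.
rewrite /gap /energy /dualB lap_quadE (bflow_pairing x fl).
have expand e : r e * (f e - grad x e / r e) ^+ 2
    = r e * f e ^+ 2 + (-2 * (f e * grad x e) + (r e)^-1 * grad x e ^+ 2).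
  by field; apply: rn0.
rewrite (eq_bigr _ (fun e _ => expand e)) !big_split /= -mulr_sumr.
set A := \sum_e _; set B := \sum_e _; set C := \sum_e _; lra.
Qed.

Lemma bset_bflowE (b : V -> R) (f : E -> R) (C : {set V}) :
  is_bflow src dst b f -> bset b C = \sum_e cut_sign C e * f e.
Proof.
move=> fl; under [RHS]eq_bigr => e _ do rewrite mulrC.
rewrite -(bflow_pairing _ fl) /bset big_mkcond.
by apply: eq_bigr => v _; case: (v \in C); rewrite ?mulr1 ?mulr0.
Qed.

Lemma fsetE (r : E -> R) (x : V -> R) (C : {set V}) :
  fset src dst r x C = \sum_e cut_sign C e * (grad x e / r e).
Proof.
rewrite /fset !(big_mkcond (fun e => (_ \in C) && _)) -big_split /=.
apply: eq_bigr => e _; rewrite /cut_sign /grad.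
by case: (src e \in C); case: (dst e \in C) => /=; ring.
Qed.

Lemma Rcut_neq0 (r : E -> R) (C : {set V}) (e : E) :
  (forall e, 0 < r e) -> cut src dst C e -> Rcut src dst r C != 0.
Proof.
move=> rpos Ce; rewrite /Rcut invr_eq0 gt_eqF // (bigD1 e) //=.
rewrite ltr_wpDr ?invr_gt0 //.
by apply: sumr_ge0 => i _; rewrite invr_ge0 ltW.
Qed.

Section FundamentalCut.
Variables (T : {set E}) (rho : V) (e : E).
Lemma cut_sign_Ccomp_other e' : e' \in T -> e' != e ->
  cut_sign (Ccomp src dst T rho e) e' = 0.
Proof.
move=> e'T ne; rewrite /cut_sign /grad.
have adj : sadj src dst (T :\ e) (src e') (dst e').
  by apply/existsP; exists e'; rewrite in_setD1 ne e'T !eqxx.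
suff -> : (src e' \in Ccomp src dst T rho e) = (dst e' \in Ccomp src dst T rho e).
  exact: subrr.
rewrite /Ccomp !inE /conn; apply/idP/idP => H.
  exact: connect_trans H (connect1 adj).
by apply: connect_trans H (connect1 _); rewrite sadj_sym.
Qed.

Lemma Ccomp_excess (r : E -> R) (b x : V -> R) (f : E -> R) :
  tree_defined_flow src dst r b x T f ->
  bset b (Ccomp src dst T rho e) - fset src dst r x (Ccomp src dst T rho e)
  = cut_sign (Ccomp src dst T rho e) e * (f e - grad x e / r e).
Proof.
move=> [fnT fl]; rewrite (bset_bflowE _ fl) fsetE -sumrB (bigD1 e) //=.
rewrite big1 ?addr0 -?mulrBr // => e' ne.
case: (boolP (e' \in T)) => [e'T | e'nT].
  by rewrite cut_sign_Ccomp_other // !mul0r subrr.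
by rewrite fnT // subrr.
Qed.

Hypothesis acyclic : forall e, e \in T -> ~~ conn src dst (T :\ e) (src e) (dst e).
Hypothesis eT : e \in T.

Lemma Ccomp_cut : cut src dst (Ccomp src dst T rho e) e.
Proof.
have := acyclic eT; rewrite /cut /Ccomp !inE /child.
case: ifP => _ h; last by rewrite (negbTE h) /conn connect0.
by rewrite conn_sym (negbTE h) /conn connect0.
Qed.

Lemma cut_sign_Ccomp_sqr : cut_sign (Ccomp src dst T rho e) e ^+ 2 = 1.
Proof.
move: Ccomp_cut; rewrite /cut /cut_sign /grad.
by case: (src e \in _); case: (dst e \in _) => //= _; ring.
Qed.

End FundamentalCut.

Lemma Delta_Rcut_sqr (r : E -> R) (b x : V -> R) (C : {set V}) :
  Rcut src dst r C != 0 ->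
  Delta src dst r b x C ^+ 2 / Rcut src dst r C ^+ 2
  = (bset b C - fset src dst r x C) ^+ 2.
Proof. by move=> R0; rewrite /Delta exprMn mulfK ?expf_neq0. Qed.

End TreeFlowGap.

Theorem mainTheorem11 (R : realFieldType) (V E : finType) (src dst : E -> V)
  (r : E -> R) (b x : V -> R) (T : {set E}) (rho : V) (f : E -> R) :
  simple_graph src dst ->
  (forall u w, conn src dst [set: E] u w) ->
  (forall e, 0 < r e) ->
  \sum_v b v = 0 ->
  spanning_tree src dst T ->
  tree_defined_flow src dst r b x T f ->
  gap src dst r b x f =
  2^-1 * \sum_(e in T) r e * (Delta src dst r b x (Ccomp src dst T rho e) ^+ 2
                               / Rcut src dst r (Ccomp src dst T rho e) ^+ 2).
Proof.
move=> _ _ rpos _ [_ acyclic] tdf; have [fnT fl] := tdf.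
have rn0 e : r e != 0 by rewrite gt_eqF.
rewrite gap_bflowE //; congr (2^-1 * _).
rewrite (bigID (mem T)) /= [X in _ + X]big1 ?addr0; last first.
  by move=> e /fnT ->; rewrite subrr expr2 !mulr0.
apply: eq_bigr => e eT.
rewrite Delta_Rcut_sqr; last exact: Rcut_neq0 rpos (Ccomp_cut rho acyclic eT).
by rewrite (Ccomp_excess rho e tdf) exprMn cut_sign_Ccomp_sqr ?mul1r.
Qed.
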